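(* Let $\mathcal N$ be an occurrence net and $x$ a place of $\mathcal N$. Then the last known cut $\mathit{LKC}(x)=\{p\in\mathcal P\mid p\not<x\ \text{and}\ t<x\text{ for all }t\in{}^\bullet p\}$ is a cut of $\mathcal N$.
   Context: A Petri net $(\mathcal P,\mathcal T,\mathcal F,\mathit{In})$ has disjoint places $\mathcal P$ and transitions $\mathcal T$, a flow relation $\mathcal F$ that is a multiset over $(\mathcal P\times\mathcal T)\cup(\mathcal T\times\mathcal P)$, and a finite multiset $\mathit{In}$ over $\mathcal P$; ${}^\bullet x(y)=\mathcal F(y,x)$, $x^\bullet(y)=\mathcal F(x,y)$, and every transition has finite nonempty pre- and postcondition. Let $<$ be the transitive closure of $\{(x,y)\mid\mathcal F(x,y)>0\}$ and $\le$ its reflexive-transitive closure. Nodes $x,y$ are in conflict if there is a place $p\ne x,y$ and distinct transitions $t_1,t_2\in p^\bullet$ with $t_1\le x$ and $t_2\le y$; they are concurrent if neither $x\le y$ nor $y\le x$ nor in conflict. An occurrence net is a Petri net in which pre- and postconditions of transitions are sets, every place has at most one incoming transition, $\mathit{In}=\{p\mid{}^\bullet p=\emptyset\}$, $\mathcal F^{-1}$ is well-founded, and no transition is in conflict with itself. A cut is a maximal set of pairwise concurrent places. *)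

From Stdlib Require Import Relations List Arith.
Set Implicit Arguments.

(* A Petri net: places and transitions are two (disjoint, since they are
   combined as a sum type below) types; the flow relation is a multiset over
   (P x T) + (T x P), given by two nat-valued functions; In is a multiset
   over P. *)
Record PetriNet := mkNet {
  place : Type;
  trans : Type;
  Fpt : place -> trans -> nat;
  Ftp : trans -> place -> nat;
  Init : place -> nat
}.

Definition node (N : PetriNet) : Type := (place N + trans N)%type.

Definition flow (N : PetriNet) (x y : node N) : nat :=
  match x, y with
  | inl p, inr t => Fpt N p t
  | inr t, inl p => Ftp N t p
  | _, _ => 0
  end.

Definition arc (N : PetriNet) (x y : node N) : Prop := 0 < flow x y.

Definition lt_net (N : PetriNet) : relation (node N) := clos_trans _ (@arc N).
Definition le_net (N : PetriNet) : relation (node N) := clos_refl_trans _ (@arc N).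

Definition finite_set (A : Type) (S : A -> Prop) : Prop :=
  exists l : list A, forall a, S a -> List.In a l.

Definition is_petri_net (N : PetriNet) : Prop :=
  (forall t : trans N,
      finite_set (fun p => 0 < Fpt N p t) /\ (exists p, 0 < Fpt N p t) /\
      finite_set (fun p => 0 < Ftp N t p) /\ (exists p, 0 < Ftp N t p)) /\
  finite_set (fun p => 0 < Init N p).

Definition conflict (N : PetriNet) (x y : node N) : Prop :=
  exists (p : place N) (t1 t2 : trans N),
    inl p <> x /\ inl p <> y /\ t1 <> t2 /\
    0 < Fpt N p t1 /\ 0 < Fpt N p t2 /\
    le_net (inr t1) x /\ le_net (inr t2) y.

Definition concurrent (N : PetriNet) (x y : node N) : Prop :=
  ~ le_net x y /\ ~ le_net y x /\ ~ conflict x y.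

Definition occurrence_net (N : PetriNet) : Prop :=
  is_petri_net N /\
  (* pre- and postconditions of transitions are sets *)
  (forall p t, Fpt N p t <= 1) /\ (forall t p, Ftp N t p <= 1) /\
  (forall p t1 t2, 0 < Ftp N t1 p -> 0 < Ftp N t2 p -> t1 = t2) /\
  (* In = { p | pre(p) empty } (as a set, i.e. multiplicity 1) *)
  (forall p, (Init N p = 1 /\ forall t, Ftp N t p = 0) \/
             (Init N p = 0 /\ exists t, 0 < Ftp N t p)) /\
  (* F^{-1} well-founded: no infinite backward chain ... F x2 F x1 *)
  well_founded (@arc N) /\
  (forall t : trans N, ~ conflict (inr t : node N) (inr t)).

Definition pairwise_concurrent (N : PetriNet) (S : place N -> Prop) : Prop :=
  forall p q, S p -> S q -> p <> q -> concurrent (inl p : node N) (inl q).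

Definition cut (N : PetriNet) (S : place N -> Prop) : Prop :=
  pairwise_concurrent N S /\
  forall S' : place N -> Prop,
    (forall p, S p -> S' p) -> pairwise_concurrent N S' -> forall p, S' p -> S p.

Definition LKC (N : PetriNet) (x : place N) : place N -> Prop :=
  fun p => ~ lt_net (inl p : node N) (inl x) /\
           forall t : trans N, 0 < Ftp N t p -> lt_net (inr t : node N) (inl x).

(* Every place p of LKC(x) lies, together with everything it causally depends
   on, below the unique transition producing x; hence two such places cannot
   be ordered (p < q would force p < x) nor in conflict (the conflict would
   reappear below that transition, which is not self-conflicting).  For
   maximality, a place q outside LKC(x) that is concurrent with x has a
   producer t with t not below x.  Walking backwards from t along producers
   not below x (this terminates since F^-1 is well founded) one either meets
   a place of LKC(x) below q, or a transition all of whose input places are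
   below x; one of these places then also feeds a transition towards x, which
   puts q in conflict with x. *)

From Stdlib Require Import Relations Wellfounded Classical.

Set Implicit Arguments.
Unset Strict Implicit.

Section NetOrder.
Variable N : PetriNet.

Lemma Fpt_lt (p : place N) (t : trans N) :
  0 < Fpt N p t -> lt_net (inl p : node N) (inr t).
Proof. intro H; apply t_step; exact H. Qed.

Lemma Ftp_lt (t : trans N) (p : place N) :
  0 < Ftp N t p -> lt_net (inr t : node N) (inl p).
Proof. intro H; apply t_step; exact H. Qed.

Lemma lt_le (a b : node N) : lt_net a b -> le_net a b.
Proof. apply clos_t_clos_rt. Qed.

Lemma le_eq_or_lt (a b : node N) : le_net a b -> a = b \/ lt_net a b.
Proof.
  intro H; apply clos_rt_rt1n in H.
  induction H as [|a c b Hac _ [<- | Hcb]].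
  - now left.
  - right; now apply t_step.
  - right; now apply t_trans with c; [apply t_step|].
Qed.

Lemma le_lt_trans (a b c : node N) : le_net a b -> lt_net b c -> lt_net a c.
Proof.
  intros Hab Hbc; destruct (le_eq_or_lt Hab) as [<- | Hab']; [exact Hbc|].
  now apply t_trans with b.
Qed.

Lemma arc_place_place (p q : place N) : ~ arc (inl p : node N) (inl q).
Proof. apply PeanoNat.Nat.lt_irrefl. Qed.

Lemma lt_place_inv (a : node N) (p : place N) :
  lt_net a (inl p) -> exists t, 0 < Ftp N t p /\ le_net a (inr t).
Proof.
  intro H; apply clos_trans_tn1 in H.
  inversion H as [? Harc | b ? Harc Hab]; subst.
  - destruct a as [q|t]; [now apply arc_place_place in Harc|].
    exists t; split; [exact Harc | apply rt_refl].
  - destruct b as [q|t]; [now apply arc_place_place in Harc|].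
    exists t; split; [exact Harc|]. now apply lt_le, clos_tn1_trans.
Qed.

Lemma le_place_inv (a : node N) (p : place N) :
  le_net a (inl p) -> a = inl p \/ exists t, 0 < Ftp N t p /\ le_net a (inr t).
Proof.
  intro H; destruct (le_eq_or_lt H) as [-> | Hlt]; [now left|].
  right; now apply lt_place_inv.
Qed.

Lemma lt_from_place_inv (p : place N) (b : node N) :
  lt_net (inl p) b -> exists u, 0 < Fpt N p u /\ le_net (inr u) b.
Proof.
  intro H; apply clos_trans_t1n in H.
  inversion H as [? Harc | a ? Harc Hab]; subst.
  - destruct b as [q|u]; [now apply arc_place_place in Harc|].
    exists u; split; [exact Harc | apply rt_refl].
  - destruct a as [q|u]; [now apply arc_place_place in Harc|].
    exists u; split; [exact Harc|]. now apply lt_le, clos_t1n_trans.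
Qed.

Hypothesis arc_wf : well_founded (@arc N).

Lemma lt_irrefl (a : node N) : ~ lt_net a a.
Proof.
  induction (wf_clos_trans _ _ arc_wf a) as [a _ IH].
  intro H; exact (IH a H H).
Qed.

Lemma conflict_lt_l (a b y : node N) : conflict a y -> lt_net a b -> conflict b y.
Proof.
  intros (p & t1 & t2 & _ & Hpy & Ht12 & Hp1 & Hp2 & Hle1 & Hle2) Hab.
  assert (Hpb : lt_net (inl p) b).
  { apply t_trans with (inr t1); [now apply Fpt_lt|].
    now apply le_lt_trans with a. }
  exists p, t1, t2; repeat split; auto.
  - intros <-; exact (lt_irrefl Hpb).
  - now apply lt_le, le_lt_trans with a.
Qed.

End NetOrder.

Section LastKnownCut.
Variable N : PetriNet.
Hypothesis arc_wf : well_founded (@arc N).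
Hypothesis preset_nonempty : forall t : trans N, exists p, 0 < Fpt N p t.
Hypothesis producer_unique :
  forall p t1 t2, 0 < Ftp N t1 p -> 0 < Ftp N t2 p -> t1 = t2.
Hypothesis no_self_conflict : forall t : trans N, ~ conflict (inr t : node N) (inr t).
Variable x : place N.

Lemma LKC_self : LKC N x x.
Proof. split; [apply (lt_irrefl arc_wf) | intros t; apply Ftp_lt]. Qed.

Lemma LKC_le_producer (p : place N) (t : trans N) :
  LKC N x p -> le_net (inr t) (inl p) ->
  exists t0, 0 < Ftp N t0 x /\ le_net (inr t : node N) (inr t0).
Proof.
  intros [_ Hprod] Hle.
  destruct (le_place_inv Hle) as [[=] | (t' & Ht'p & Hle')].
  destruct (lt_place_inv (Hprod t' Ht'p)) as (t0 & Ht0x & Ht't0).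
  exists t0; split; [exact Ht0x | now apply rt_trans with (inr t')].
Qed.

Lemma LKC_not_le (p q : place N) :
  LKC N x p -> LKC N x q -> p <> q -> ~ le_net (inl p : node N) (inl q).
Proof.
  intros [Hpx _] [_ Hprod] Hpq Hle.
  destruct (le_place_inv Hle) as [[= ->] | (t & Htq & Hpt)]; [easy|].
  apply Hpx, (le_lt_trans Hpt), Hprod, Htq.
Qed.

Lemma LKC_not_conflict (p q : place N) :
  LKC N x p -> LKC N x q -> ~ conflict (inl p : node N) (inl q).
Proof.
  intros Hp Hq (r & t1 & t2 & _ & _ & Ht12 & Hr1 & Hr2 & Hle1 & Hle2).
  destruct (LKC_le_producer Hp Hle1) as (t0 & Ht0 & Hle10).
  destruct (LKC_le_producer Hq Hle2) as (t0' & Ht0' & Hle20).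
  rewrite <- (producer_unique Ht0 Ht0') in Hle20.
  apply (no_self_conflict (t := t0)).
  exists r, t1, t2; repeat split; easy.
Qed.

Lemma LKC_pairwise_concurrent : pairwise_concurrent N (LKC N x).
Proof.
  intros p q Hp Hq Hpq; repeat split.
  - exact (LKC_not_le Hp Hq Hpq).
  - exact (LKC_not_le Hq Hp (not_eq_sym Hpq)).
  - exact (LKC_not_conflict Hp Hq).
Qed.

Lemma not_LKC_producer (q : place N) :
  ~ LKC N x q -> ~ lt_net (inl q : node N) (inl x) ->
  exists t, 0 < Ftp N t q /\ ~ lt_net (inr t : node N) (inl x).
Proof.
  intros HnL Hqx; apply NNPP; intro Hnone.
  apply HnL; split; [exact Hqx|].
  intros t Htq; apply NNPP; intro Htx; eauto.
Qed.

Lemma LKC_below_or_conflict (t : trans N) :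
  ~ lt_net (inr t : node N) (inl x) ->
  (exists p, LKC N x p /\ lt_net (inl p : node N) (inr t)) \/
  conflict (inr t : node N) (inl x).
Proof.
  assert (wf_trans : well_founded (fun a b : trans N => lt_net (inr a) (inr b))).
  { exact (wf_inverse_image _ _ _ _ (wf_clos_trans _ _ arc_wf)). }
  induction (wf_trans t) as [t _ IH]; intro Htx.
  destruct (classic (exists r, 0 < Fpt N r t /\ ~ lt_net (inl r : node N) (inl x)))
    as [(r & Hrt & Hrx) | Hall].
  - destruct (classic (LKC N x r)) as [HL | HnL].
    + left; exists r; split; [exact HL | now apply Fpt_lt].
    + destruct (not_LKC_producer HnL Hrx) as (t' & Ht'r & Ht'x).
      assert (Ht't : lt_net (inr t' : node N) (inr t)).
      { apply t_trans with (inl r); [now apply Ftp_lt | now apply Fpt_lt]. }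
      destruct (IH t' Ht't Ht'x) as [(p & Hp & Hpt') | Hcf].
      * left; exists p; split; [exact Hp | now apply t_trans with (inr t')].
      * right; exact (conflict_lt_l arc_wf Hcf Ht't).
  - (* every input place of t is below x, so one of them also feeds a
       transition u leading to x, and u differs from t *)
    right; destruct (preset_nonempty t) as [r Hrt].
    assert (Hrx : lt_net (inl r : node N) (inl x)).
    { apply NNPP; intro Hrx; apply Hall; now exists r. }
    destruct (lt_from_place_inv Hrx) as (u & Hru & Hux).
    exists r, t, u; repeat split; try easy.
    + intros [= ->]; exact (lt_irrefl arc_wf Hrx).
    + intros ->; apply Htx.
      destruct (le_place_inv Hux) as [[=] | (t' & Ht'x & Hut')].
      now apply (le_lt_trans Hut'), Ftp_lt.
    + apply rt_refl.
Qed.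

Lemma LKC_maximal (S : place N -> Prop) :
  (forall p, LKC N x p -> S p) -> pairwise_concurrent N S ->
  forall q, S q -> LKC N x q.
Proof.
  intros Hsub Hpc q Hq; apply NNPP; intro HnL.
  assert (Hqx : q <> x) by (intros ->; exact (HnL LKC_self)).
  destruct (Hpc q x Hq (Hsub x LKC_self) Hqx) as (Hnqx & _ & Hncf).
  destruct (not_LKC_producer HnL (fun H => Hnqx (lt_le H))) as (t & Htq & Htx).
  destruct (LKC_below_or_conflict Htx) as [(p & Hp & Hpt) | Hcf].
  - assert (Hpq : lt_net (inl p : node N) (inl q)) by (apply t_trans with (inr t); [exact Hpt | now apply Ftp_lt]).
    assert (Hneq : p <> q) by (intros ->; exact (lt_irrefl arc_wf Hpq)).
    exact (proj1 (Hpc p q (Hsub p Hp) Hq Hneq) (lt_le Hpq)).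
  - exact (Hncf (conflict_lt_l arc_wf Hcf (Ftp_lt Htq))).
Qed.

End LastKnownCut.

Theorem mainTheorem16 (N : PetriNet) (HN : occurrence_net N) (x : place N) :
  cut N (LKC N x).
Proof.
  destruct HN as ([Hpre _] & _ & _ & Huniq & _ & Hwf & Hnc).
  assert (Hpreset : forall t : trans N, exists p, 0 < Fpt N p t)
    by (intro t; apply (Hpre t)).
  split.
  - now apply LKC_pairwise_concurrent.
  - now apply LKC_maximal.
Qed.
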